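(* Let $n\ge 2$ and let $S=[A_0,\dots,A_n]$ be a regular $n$-simplex lying in $\mathbb{R}^m$ for some $m\ge n+1$, with edge length $u$ and circumradius $R$. Let $Q_0$ be the reflection of $A_0$ in the affine hull $H_0$ of the facet $[A_1,\dots,A_n]$, and let $\Omega$ be the set of all points $Q\in\mathbb{R}^m$ for which the $n$-simplex $[Q,A_1,\dots,A_n]$ is regular. Then $$\{\|Q-A_0\|:Q\in\Omega\}=\Big[0,\sqrt{\tfrac{2(n+1)}{n}}\,u\Big]=\Big[0,\tfrac{2(n+1)}{n}R\Big],$$ with the extreme values attained at $Q=A_0$ and $Q=Q_0$.
   Context: An $n$-simplex is the convex hull of $n+1$ affinely independent points; it is regular if all its edges have the same length. Its circumradius is the radius of the $(n-1)$-sphere (in its affine hull) through all its vertices. *)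

From HB Require Import structures.
From mathcomp Require Import all_boot all_order all_algebra.
From mathcomp Require Import reals.
Set Implicit Arguments. Unset Strict Implicit. Unset Printing Implicit Defensive.
Import Order.TTheory GRing.Theory Num.Theory.
Local Open Scope ring_scope.

Section Defs.
Variables (R : realType) (m : nat).
Notation vec := 'rV[R]_m.

Definition dotv (x y : vec) : R := \sum_(k < m) x ord0 k * y ord0 k.
Definition edist (x y : vec) : R := Num.sqrt (dotv (x - y) (x - y)).

Definition aff_indep (n : nat) (A : 'I_n.+1 -> vec) : Prop :=
  row_free (\matrix_(i < n) (A (lift ord0 i) - A ord0)).

Definition in_aff_hull (k : nat) (B : 'I_k -> vec) (c : vec) : Prop :=
  exists w : 'I_k -> R, \sum_(i < k) w i = 1 /\ c = \sum_(i < k) w i *: B i.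

Definition regular_simplex_edge (n : nat) (A : 'I_n.+1 -> vec) (u : R) : Prop :=
  aff_indep A /\ forall i j : 'I_n.+1, i != j -> edist (A i) (A j) = u.

Definition regular_simplex (n : nat) (A : 'I_n.+1 -> vec) : Prop :=
  exists u, regular_simplex_edge A u.

Definition is_circumradius (n : nat) (A : 'I_n.+1 -> vec) (r : R) : Prop :=
  exists c, in_aff_hull A c /\ forall i, edist c (A i) = r.

Definition facet0 (n : nat) (A : 'I_n.+1 -> vec) : 'I_n -> vec :=
  fun i => A (lift ord0 i).

Definition replace0 (n : nat) (A : 'I_n.+1 -> vec) (Q : vec) : 'I_n.+1 -> vec :=
  fun i => if i == ord0 then Q else A i.

(* Q0 is the reflection of x in the affine hull of B: Q0 = 2P - x where P is the
   orthogonal projection of x onto aff(B) *)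
Definition is_reflection_in_hull (k : nat) (B : 'I_k -> vec) (x Q0 : vec) : Prop :=
  exists P, in_aff_hull B P /\
    (forall i j, dotv (x - P) (B i - B j) = 0) /\ Q0 = 2%:R *: P - x.

End Defs.

(* Put the origin at A_0 and let x_i = A_i - A_0, so that <x_i, x_j> = (1 + d_ij) u^2/2.
   A point Q = A_0 + z completes [A_1, ..., A_n] to a regular simplex iff
   2 <z, x_i> = |z|^2 for all i.  For such z, with s = x_1 + ... + x_n, completing the
   square gives |z - (2/n) s|^2 = 2(n+1)/n u^2 - |z|^2, so |z| <= sqrt(2(n+1)/n) u, with
   equality at z = (2/n) s = Q_0 - A_0.  Every smaller length is attained by some
   z = b s + mu e with e orthogonal to the facet, which exists because m > n.  The
   circumcentre is A_0 + s/(n+1), which relates u to r. *)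

From mathcomp Require Import all_boot all_order all_algebra.
From mathcomp Require Import reals.
From mathcomp Require Import ring lra.
Import Order.TTheory GRing.Theory Num.Theory.
Local Open Scope ring_scope.
Set Implicit Arguments. Unset Strict Implicit. Unset Printing Implicit Defensive.

Lemma subrBB (V : zmodType) (x y z : V) : (x - z) - (y - z) = x - y.
Proof. by rewrite opprB addrA subrK. Qed.

Section Dot.
Variables (R : realType) (m : nat).
Notation vec := 'rV[R]_m.
Implicit Types x y z : vec.

Lemma dotvC x y : dotv x y = dotv y x.
Proof. by apply: eq_bigr => k _; rewrite mulrC. Qed.

Lemma dotvDl x y z : dotv (x + y) z = dotv x z + dotv y z.
Proof. by rewrite /dotv -big_split; apply: eq_bigr => k _; rewrite mxE mulrDl. Qed.

Lemma dotvZl a x y : dotv (a *: x) y = a * dotv x y.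
Proof. by rewrite /dotv mulr_sumr; apply: eq_bigr => k _; rewrite mxE mulrA. Qed.

Lemma dotvNl x y : dotv (- x) y = - dotv x y.
Proof. by rewrite -scaleN1r dotvZl mulN1r. Qed.

Lemma dotvBl x y z : dotv (x - y) z = dotv x z - dotv y z.
Proof. by rewrite dotvDl dotvNl. Qed.

Lemma dotvDr x y z : dotv x (y + z) = dotv x y + dotv x z.
Proof. by rewrite dotvC dotvDl !(dotvC x). Qed.

Lemma dotvZr a x y : dotv x (a *: y) = a * dotv x y.
Proof. by rewrite dotvC dotvZl dotvC. Qed.

Lemma dotvBr x y z : dotv x (y - z) = dotv x y - dotv x z.
Proof. by rewrite !(dotvC x) dotvBl. Qed.

Lemma dotv0l x : dotv 0 x = 0.
Proof. by rewrite -(scale0r 0) dotvZl mul0r. Qed.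

Lemma dotv_suml (I : finType) (F : I -> vec) y :
  dotv (\sum_i F i) y = \sum_i dotv (F i) y.
Proof.
rewrite /dotv; under eq_bigr => k _ do rewrite summxE mulr_suml.
by rewrite exchange_big.
Qed.

Lemma dotv_sumr (I : finType) (F : I -> vec) y :
  dotv y (\sum_i F i) = \sum_i dotv y (F i).
Proof. by rewrite dotvC dotv_suml; apply: eq_bigr => i _; rewrite dotvC. Qed.

Lemma dotvDD x y : dotv (x + y) (x + y) = dotv x x + 2 * dotv x y + dotv y y.
Proof. rewrite dotvDl !dotvDr (dotvC y x); lra. Qed.

Lemma dotvBB x y : dotv (x - y) (x - y) = dotv x x - 2 * dotv x y + dotv y y.
Proof. rewrite dotvBl !dotvBr (dotvC y x); lra. Qed.

Lemma dotv_ge0 x : 0 <= dotv x x.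
Proof. by apply: sumr_ge0 => k _; rewrite -expr2 sqr_ge0. Qed.

Lemma dotv_eq0 x : (dotv x x == 0) = (x == 0).
Proof.
apply/eqP/eqP => [|->]; last exact: dotv0l.
rewrite /dotv; under eq_bigr do rewrite -expr2.
move=> /psumr_eq0P x0; apply/rowP => k; rewrite mxE.
by apply/eqP; rewrite -sqrf_eq0 x0 // => l _; rewrite sqr_ge0.
Qed.

Lemma sqr_edist x y : edist x y ^+ 2 = dotv (x - y) (x - y).
Proof. by rewrite sqr_sqrtr // dotv_ge0. Qed.

Lemma edist_ge0 x y : 0 <= edist x y.
Proof. exact: sqrtr_ge0. Qed.

Lemma edistC x y : edist x y = edist y x.
Proof. rewrite /edist !dotvBB (dotvC y x); congr Num.sqrt; lra. Qed.

Lemma edist_from_sqr x y a : 0 <= a -> dotv (x - y) (x - y) = a ^+ 2 -> edist x y = a.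
Proof. by move=> a0 xya; rewrite /edist xya sqrtr_sqr ger0_norm. Qed.

Lemma exists_orthogonal n (x : 'I_n -> vec) : (n < m)%N ->
  exists2 e : vec, e != 0 & forall i, dotv e (x i) = 0.
Proof.
move=> nm; pose X := \matrix_(i < n) x i.
have : kermx X^T != 0.
  rewrite kermx_eq0 /row_free mxrank_tr.
  by rewrite neq_ltn (leq_ltn_trans (rank_leq_row X)).
move=> /rowV0Pn[e /sub_kermxP eX e0]; exists e => // i.
have -> : dotv e (x i) = (e *m X^T) 0 i.
  by rewrite mxE; apply: eq_bigr => k _; rewrite !mxE.
by rewrite eX mxE.
Qed.

Lemma exists_add_orthogonal x e T : dotv x e = 0 -> e != 0 -> 0 <= T ->
  exists mu, dotv (x + mu *: e) (x + mu *: e) = dotv x x + T.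
Proof.
move=> xe e0 T0; have ee : 0 < dotv e e by rewrite lt_def dotv_eq0 e0 dotv_ge0.
exists (Num.sqrt (T / dotv e e)).
rewrite dotvDD dotvZr xe dotvZl dotvZr.
by rewrite !mulr0 addr0 mulrA -expr2 sqr_sqrtr ?divr_ge0 ?dotv_ge0 ?divfK ?gt_eqF.
Qed.

Lemma comb_subr k (B : 'I_k -> vec) (w : 'I_k -> R) c :
  \sum_i w i = 1 -> \sum_i w i *: B i - c = \sum_i w i *: (B i - c).
Proof.
move=> w1; under [RHS]eq_bigr do rewrite scalerBr.
by rewrite sumrB -scaler_suml w1 scale1r.
Qed.

End Dot.

Lemma sqrtrM_sqr (R : rcfType) (a b : R) : 0 <= a -> 0 <= b ->
  Num.sqrt (a * b ^+ 2) = Num.sqrt a * b.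
Proof. by move=> a0 b0; rewrite sqrtrM // sqrtr_sqr ger0_norm. Qed.

Section Gram.
Variables (R : realType) (m n : nat) (x : 'I_n -> 'rV[R]_m) (q : R).
Hypothesis gram : forall i j, dotv (x i) (x j) = q + (i == j)%:R * q.

Lemma dotv_comb_gram (w : 'I_n -> R) j :
  dotv (\sum_i w i *: x i) (x j) = q * \sum_i w i + q * w j.
Proof.
rewrite dotv_suml; under eq_bigr do rewrite dotvZl gram mulrDr.
rewrite big_split /= -mulr_suml mulrC; congr (_ + _).
rewrite (bigD1 j) //= eqxx mul1r big1 ?addr0 1?mulrC // => i /negPf ->.
by rewrite mul0r mulr0.
Qed.

Lemma dotv_sum_gram j : dotv (\sum_i x i) (x j) = n.+1%:R * q.
Proof.
have := dotv_comb_gram (fun=> 1) j; under eq_bigr do rewrite scale1r.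
by rewrite sumr_const card_ord => ->; rewrite -natr1; ring.
Qed.

Lemma dotv_sum_sum_gram : dotv (\sum_i x i) (\sum_i x i) = n%:R * (n.+1%:R * q).
Proof.
rewrite dotv_sumr; under eq_bigr do rewrite dotv_sum_gram.
by rewrite sumr_const card_ord [RHS]mulr_natl.
Qed.

Lemma gram_weights_eq (w : 'I_n -> R) : q != 0 ->
  (forall i j, dotv (\sum_k w k *: x k) (x i) = dotv (\sum_k w k *: x k) (x j)) ->
  forall i j, w i = w j.
Proof.
by move=> q0 eqw i j; move: (eqw i j); rewrite !dotv_comb_gram => /addrI/(mulfI q0).
Qed.

Lemma row_free_gram : q != 0 -> row_free (\matrix_(i < n) x i).
Proof.
move=> q0; apply/inj_row_free => v; rewrite mulmx_sum_row.
under eq_bigr do rewrite rowK; move=> v0.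
have vj j : v 0 j = - \sum_i v 0 i.
  have := dotv_comb_gram (v 0) j; rewrite v0 dotv0l -mulrDr => /esym/eqP.
  by rewrite mulf_eq0 (negPf q0) addrC addr_eq0 => /eqP.
have sv : \sum_i v 0 i = 0.
  have : \sum_i v 0 i = n%:R * - \sum_i v 0 i.
    by rewrite {1}(eq_bigr _ (fun j _ => vj j)) sumr_const card_ord mulr_natl.
  move/eqP; rewrite mulrN -addr_eq0 -{1}(mul1r (\sum_i _)) -mulrDl mulf_eq0.
  by case/orP => [|/eqP //]; rewrite addrC natr1 pnatr_eq0.
by apply/rowP => j; rewrite vj sv oppr0 mxE.
Qed.

End Gram.

Section Simplex.
Variables (R : realType) (m n : nat) (A : 'I_n.+1 -> 'rV[R]_m).

Definition edge_vec (i : 'I_n) : 'rV[R]_m := A (lift ord0 i) - A ord0.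

Definition is_apex (z : 'rV[R]_m) : Prop :=
  forall i, 2 * dotv z (edge_vec i) = dotv z z.

Lemma replace0_0 Q : replace0 A Q ord0 = Q.
Proof. by rewrite /replace0 eqxx. Qed.

Lemma replace0_lift Q i : replace0 A Q (lift ord0 i) = A (lift ord0 i).
Proof. by rewrite /replace0 eq_sym (negPf (neq_lift _ _)). Qed.

Lemma aff_hull_edge_comb c : in_aff_hull A c ->
  exists w, c - A ord0 = \sum_i w i *: edge_vec i.
Proof.
case=> w [w1 ->]; exists (fun i => w (lift ord0 i)).
by rewrite comb_subr // big_ord_recl subrr scaler0 add0r.
Qed.

Lemma facet_hull_edge_comb P : in_aff_hull (facet0 A) P ->
  exists2 w, \sum_i w i = 1 & P - A ord0 = \sum_i w i *: edge_vec i.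
Proof. by case=> w [w1 ->]; exists w; rewrite ?comb_subr. Qed.

Variable u : R.
Hypothesis distA : forall i j, i != j -> edist (A i) (A j) = u.

Lemma sqr_edge_vec i : dotv (edge_vec i) (edge_vec i) = u ^+ 2.
Proof. by rewrite -sqr_edist distA // eq_sym neq_lift. Qed.

Lemma gram_edge_vec i j :
  dotv (edge_vec i) (edge_vec j) = u ^+ 2 / 2 + (i == j)%:R * (u ^+ 2 / 2).
Proof.
have [<-|ij] := eqVneq i j; first by rewrite sqr_edge_vec /=; lra.
have := sqr_edist (A (lift ord0 i)) (A (lift ord0 j)).
rewrite distA ?(inj_eq lift_inj) // -(subrBB _ _ (A ord0)) dotvBB.
by rewrite !sqr_edge_vec /= mul0r addr0; lra.
Qed.

Lemma aff_indep_equidistant : u != 0 -> aff_indep A.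
Proof.
move=> u0; apply: (row_free_gram gram_edge_vec).
by rewrite mulf_neq0 ?expf_neq0 // invr_eq0 pnatr_eq0.
Qed.

Lemma edge_gt0 : (0 < n)%N -> aff_indep A -> 0 < u.
Proof.
move=> n0 indA; pose i0 := Ordinal n0.
have u_ge0 : 0 <= u.
  by rewrite -(distA (i := ord0) (j := lift ord0 i0)) ?neq_lift ?edist_ge0.
rewrite lt_def u_ge0 andbT; apply/eqP => u0.
have x0 : edge_vec i0 = 0 by apply/eqP; rewrite -dotv_eq0 sqr_edge_vec u0 expr0n.
have : delta_mx 0 i0 = 0 :> 'rV[R]_n.
  by apply: (row_free_inj indA); rewrite /= -rowE rowK -/(edge_vec i0) x0 mul0mx.
by move/matrixP/(_ 0 i0); rewrite !mxE !eqxx => /eqP; rewrite oner_eq0.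
Qed.

End Simplex.

Section Apex.
Variables (R : realType) (m n : nat) (A : 'I_n.+1 -> 'rV[R]_m) (u : R).
Hypothesis distA : forall i j, i != j -> edist (A i) (A j) = u.
Hypotheses (n_gt0 : (0 < n)%N) (u_gt0 : 0 < u).

Local Notation x := (edge_vec A).
Local Notation s := (\sum_i edge_vec A i).
Let gram := gram_edge_vec distA.

Let half_sqr_neq0 : u ^+ 2 / 2 != 0.
Proof. by rewrite mulf_neq0 ?invr_eq0 ?pnatr_eq0 ?expf_neq0 ?gt_eqF. Qed.

Let n_neq0 : n%:R != 0 :> R.
Proof. by rewrite pnatr_eq0 -lt0n. Qed.

Let n1_neq0 : 1 + n%:R != 0 :> R.
Proof. by rewrite addrC natr1 pnatr_eq0. Qed.

Let u_neq0 : u != 0 := lt0r_neq0 u_gt0.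

Lemma dotv_facet Q i :
  dotv (Q - A (lift ord0 i)) (Q - A (lift ord0 i)) =
  dotv (Q - A ord0) (Q - A ord0) - 2 * dotv (Q - A ord0) (x i) + u ^+ 2.
Proof. by rewrite -(subrBB Q _ (A ord0)) dotvBB (sqr_edge_vec distA). Qed.

Lemma facet_equidistant_apex Q :
  (forall i, edist Q (A (lift ord0 i)) = u) <-> is_apex A (Q - A ord0).
Proof.
split=> QA i; first by have := sqr_edist Q (A (lift ord0 i)); rewrite QA dotv_facet; lra.
by apply: edist_from_sqr; rewrite ?ltW // dotv_facet; have := QA i; lra.
Qed.

Lemma regular_replace0 Q :
  (forall i, edist Q (A (lift ord0 i)) = u) -> regular_simplex (replace0 A Q).
Proof.
move=> QA; have dist : forall i j, i != j -> edist (replace0 A Q i) (replace0 A Q j) = u.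
  move=> i j; case: (unliftP ord0 i) => [i' ->|->]; case: (unliftP ord0 j) => [j' ->|->];
    rewrite ?replace0_lift ?replace0_0 ?eqxx // => ij.
  - exact: distA.
  - by rewrite edistC.
by exists u; split => //; apply: aff_indep_equidistant dist u_neq0.
Qed.

Lemma regular_replace0_facet Q : (1 < n)%N -> regular_simplex (replace0 A Q) ->
  forall i, edist Q (A (lift ord0 i)) = u.
Proof.
move=> n1 [v [_ distQ]] i.
have vu : v = u.
  pose i0 : 'I_n := Ordinal n_gt0; pose i1 : 'I_n := Ordinal n1.
  have i01 : lift ord0 i0 != lift ord0 i1 by rewrite (inj_eq lift_inj).
  by rewrite -(distQ _ _ i01) !replace0_lift distA.
by rewrite -vu -(replace0_0 A Q) -(replace0_lift A Q) distQ // neq_lift.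
Qed.

Lemma dotv_apex_sub_edge_sum z : is_apex A z ->
  dotv (z - (2 / n%:R) *: s) (z - (2 / n%:R) *: s) =
  2 * n.+1%:R / n%:R * u ^+ 2 - dotv z z.
Proof.
move=> zx; have zs : dotv z s = n%:R * (dotv z z / 2).
  rewrite dotv_sumr (eq_bigr (fun=> dotv z z / 2)) => [|i _]; last by have := zx i; lra.
  by rewrite sumr_const card_ord mulr_natl.
rewrite dotvBB dotvZr zs dotvZl dotvZr (dotv_sum_sum_gram gram) -natr1.
by field.
Qed.

Lemma apex_sqr_le z : is_apex A z ->
  dotv z z <= 2 * n.+1%:R / n%:R * u ^+ 2.
Proof. by move=> /dotv_apex_sub_edge_sum zs; rewrite -subr_ge0 -zs dotv_ge0. Qed.

Lemma exists_apex D : (n < m)%N -> 0 <= D -> D <= 2 * n.+1%:R / n%:R * u ^+ 2 ->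
  exists z, is_apex A z /\ dotv z z = D.
Proof.
move=> nm D0 DK; have [e e0 ex] := exists_orthogonal x nm.
pose b := D / (n.+1%:R * u ^+ 2).
have bs_e : dotv (b *: s) e = 0.
  by rewrite dotvZl dotv_suml big1 ?mulr0 // => i _; rewrite dotvC ex.
pose T := D - b ^+ 2 * dotv s s.
have T0 : 0 <= T.
  have -> : T = D * (2 * n.+1%:R / n%:R * u ^+ 2 - D) * (n%:R / (2 * n.+1%:R * u ^+ 2)).
    rewrite /T /b (dotv_sum_sum_gram gram); field.
    by rewrite ?u_neq0 ?n1_neq0 ?n_neq0.
  apply: mulr_ge0; first apply: mulr_ge0 => //; first by rewrite subr_ge0.
  by rewrite divr_ge0 ?ler0n // mulr_ge0 ?sqr_ge0 ?mulr_ge0 ?ler0n.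
have [mu z2] := exists_add_orthogonal bs_e e0 T0.
exists (b *: s + mu *: e); split => [i|]; last first.
  by rewrite z2 dotvZl dotvZr mulrA -expr2 /T addrC subrK.
rewrite z2 dotvDl !dotvZl (dotv_sum_gram gram) ex mulr0 addr0 /T /b.
by rewrite dotvZr (dotv_sum_sum_gram gram); field; rewrite ?u_neq0 ?n1_neq0 ?n_neq0.
Qed.

Lemma edge_sum_apex_max : let z := (2 / n%:R) *: s in
  is_apex A z /\ dotv z z = 2 * n.+1%:R / n%:R * u ^+ 2.
Proof.
rewrite /=; split=> [i|];
  rewrite !dotvZl !dotvZr ?(dotv_sum_gram gram) (dotv_sum_sum_gram gram);
  by field; rewrite ?n_neq0.
Qed.

Lemma reflection_edge_sum Q0 : is_reflection_in_hull (facet0 A) (A ord0) Q0 ->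
  Q0 - A ord0 = (2 / n%:R) *: s.
Proof.
case=> P [/facet_hull_edge_comb[w w1 Pw] [orth ->]].
have Px i j : dotv (P - A ord0) (x i) = dotv (P - A ord0) (x j).
  apply/eqP; rewrite -subr_eq0 -dotvBr subrBB -oppr_eq0 -dotvNl opprB.
  exact/eqP/orth.
have w_eq : forall i j, w i = w j.
  by apply: (gram_weights_eq gram half_sqr_neq0); rewrite -Pw; exact: Px.
pose i0 : 'I_n := Ordinal n_gt0.
have w0 : w i0 = n%:R^-1.
  have : \sum_i w i = n%:R * w i0.
    by rewrite (eq_bigr (fun=> w i0)) ?sumr_const ?card_ord ?mulr_natl // => i _.
  by rewrite w1 => h; apply: (mulfI n_neq0); rewrite -h mulfV.
have -> : 2%:R *: P - A ord0 - A ord0 = 2%:R *: (P - A ord0).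
  by rewrite scalerBr [2%:R *: A ord0]scaler_nat mulr2n opprD addrA.
rewrite Pw (eq_bigr (fun i => w i0 *: x i)) => [|i _]; last by rewrite (w_eq i i0).
by rewrite -scaler_sumr scalerA w0.
Qed.

Lemma apex_max_circumradius r : is_circumradius A r ->
  Num.sqrt (2 * n.+1%:R / n%:R) * u = 2 * n.+1%:R / n%:R * r.
Proof.
case=> c [/aff_hull_edge_comb[w cw] cr].
have cx i : dotv (c - A ord0) (x i) = u ^+ 2 / 2.
  have := sqr_edist c (A (lift ord0 i)).
  by rewrite cr -(cr ord0) sqr_edist dotv_facet; lra.
have w_eq : forall i j, w i = w j.
  by apply: (gram_weights_eq gram half_sqr_neq0) => i j; rewrite -cw !cx.
pose i0 : 'I_n := Ordinal n_gt0.
have c_s : c - A ord0 = w i0 *: s.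
  by rewrite cw scaler_sumr; apply: eq_bigr => i _; rewrite (w_eq i i0).
have w0 : w i0 = n.+1%:R^-1.
  have N1 : n.+1%:R != 0 :> R by rewrite pnatr_eq0.
  apply: (mulIf N1); rewrite mulVf //; apply: (mulIf half_sqr_neq0).
  by rewrite mul1r -[RHS](cx i0) c_s dotvZl (dotv_sum_gram gram) mulrA.
have r2 : r ^+ 2 = n%:R / n.+1%:R * (u ^+ 2 / 2).
  rewrite -(cr ord0) sqr_edist c_s dotvZl dotvZr (dotv_sum_sum_gram gram) w0.
  by field.
have r_ge0 : 0 <= r by rewrite -(cr ord0) edist_ge0.
have K_ge0 : 0 <= 2 * n.+1%:R / n%:R :> R by rewrite divr_ge0 ?mulr_ge0 ?ler0n.
apply/eqP; rewrite -(eqrXn2 (n := 2)) ?mulr_ge0 ?sqrtr_ge0 ?invr_ge0 ?ler0n ?(ltW u_gt0) //.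
rewrite !exprMn r2 sqr_sqrtr //.
by apply/eqP; field; rewrite ?n_neq0 ?n1_neq0.
Qed.

End Apex.

Unset Implicit Arguments.

Theorem theorem5p2 (R : realType) (n m : nat) (A : 'I_n.+1 -> 'rV[R]_m)
    (u r : R) (Q0 : 'rV[R]_m) :
  (2 <= n)%N -> (n.+1 <= m)%N ->
  regular_simplex_edge A u ->
  is_circumradius A r ->
  is_reflection_in_hull (facet0 A) (A ord0) Q0 ->
  (forall d : R,
     (exists Q, regular_simplex (replace0 A Q) /\ edist Q (A ord0) = d) <->
     (0 <= d /\ d <= Num.sqrt (2 * n.+1%:R / n%:R) * u)) /\
  Num.sqrt (2 * n.+1%:R / n%:R) * u = 2 * n.+1%:R / n%:R * r /\
  regular_simplex (replace0 A (A ord0)) /\ edist (A ord0) (A ord0) = 0 /\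
  regular_simplex (replace0 A Q0) /\
  edist Q0 (A ord0) = Num.sqrt (2 * n.+1%:R / n%:R) * u.
Proof.
move=> n2 nm [indA distA] circ refl.
have n_gt0 : (0 < n)%N by apply: ltnW.
have u_gt0 := edge_gt0 distA n_gt0 indA.
have K_ge0 : 0 <= 2 * n.+1%:R / n%:R * u ^+ 2 :> R.
  by apply: mulr_ge0; [rewrite divr_ge0 ?mulr_ge0 ?ler0n | exact: sqr_ge0].
have sqrtK : Num.sqrt (2 * n.+1%:R / n%:R * u ^+ 2) = Num.sqrt (2 * n.+1%:R / n%:R) * u.
  by rewrite sqrtrM_sqr ?divr_ge0 ?mulr_ge0 ?ler0n ?ltW.
have apexE := facet_equidistant_apex distA u_gt0.
have [Q0_apex Q0_max] := edge_sum_apex_max distA n_gt0.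
rewrite -(reflection_edge_sum distA n_gt0 u_gt0 refl) in Q0_apex Q0_max.
split.
  move=> d; split => [[Q [/(regular_replace0_facet distA n_gt0 n2) QA <-]] | [d0 dK]].
    split; first exact: edist_ge0.
    by rewrite -sqrtK; apply/ler_wsqrtr/(apex_sqr_le distA n_gt0)/apexE.
  have dK2 : d ^+ 2 <= 2 * n.+1%:R / n%:R * u ^+ 2.
    by rewrite -(sqr_sqrtr K_ge0) sqrtK !expr2; apply: ler_pM.
  have [z [z_apex z_sqr]] := exists_apex distA n_gt0 u_gt0 nm (sqr_ge0 d) dK2.
  exists (z + A ord0); split; last by rewrite /edist addrK z_sqr sqrtr_sqr ger0_norm.
  by apply/(regular_replace0 distA u_gt0)/apexE; rewrite addrK.
split; first exact: (apex_max_circumradius distA n_gt0 u_gt0 circ).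
split; first by apply: (regular_replace0 distA u_gt0) => i; rewrite distA // neq_lift.
split; first by rewrite /edist subrr dotv0l sqrtr0.
split; last by rewrite /edist Q0_max sqrtK.
exact/(regular_replace0 distA u_gt0)/apexE.
Qed.
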